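(* Let $n\geq 3$ be an integer and let $\varepsilon>0$ satisfy $\varepsilon<1/n$ if $n$ is odd, and $\varepsilon<2/n$ if $n$ is even. Assume there exists a real orthogonal $n\times n$ matrix $M=(m_{j,k})$ such that for every $j,k=1,\dots,n$, $$\left(\frac{1-\varepsilon}{n}\right)^{1/2}\leq |m_{j,k}|\leq \left(\frac{1+\varepsilon}{n}\right)^{1/2}.$$ Then $n$ is a multiple of $4$ and there exists a Hadamard matrix of order $n$.
   Context: A Hadamard matrix of order $n$ is an $n\times n$ matrix with entries in $\{+1,-1\}$ whose rows are pairwise orthogonal. *)

From mathcomp Require Import all_boot all_order all_algebra.
From mathcomp Require Import reals.
Set Implicit Arguments. Unset Strict Implicit. Unset Printing Implicit Defensive.
Import Order.TTheory GRing.Theory Num.Theory.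
Local Open Scope ring_scope.

Definition is_hadamard (n : nat) (H : 'M[int]_n) : Prop :=
  (forall i j, H i j = 1 \/ H i j = -1) /\
  (forall i i', i != i' -> \sum_(k < n) H i k * H i' k = 0).

Definition orthogonal_mx (R : ringType) (n : nat) (M : 'M[R]_n) : Prop :=
  M *m M^T = 1%:M.

From mathcomp Require Import all_boot all_order all_algebra.
From mathcomp Require Import reals.
From mathcomp Require Import zify ring lra.
Set Implicit Arguments. Unset Strict Implicit. Unset Printing Implicit Defensive.
Import Order.TTheory GRing.Theory Num.Theory.
Local Open Scope ring_scope.

(* Let S be the sign pattern of M.  For distinct rows i, i', orthogonality of M gives
   sum_k S_ik S_i'k = sum_k S_ik S_i'k (1 - n |m_ik| |m_i'k|), and every term of the
   right-hand side has modulus at most eps, so the integer sum_k S_ik S_i'k has modulus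
   at most n eps.  This is < 1 for odd n, and < 2 for even n, where the sum is even:
   in both cases it vanishes, so S is a Hadamard matrix.  For three distinct rows a, b, c
   of a Hadamard matrix, sum_k (h_ak + h_bk) (h_ak + h_ck) = n by orthogonality, while
   each term is 0 or 4; hence 4 divides n. *)

Definition sgn_pm (R : realDomainType) (x : R) : int := if 0 <= x then 1 else -1.

Lemma sgn_pmP (R : realDomainType) (x : R) : sgn_pm x = 1 \/ sgn_pm x = -1.
Proof. by rewrite /sgn_pm; case: ifP; [left | right]. Qed.

Lemma sgn_pm_mul_norm (R : realDomainType) (x : R) : (sgn_pm x)%:~R * `|x| = x.
Proof.
rewrite /sgn_pm; case: (leP 0 x) => [x_ge0 | x_lt0]; first by rewrite mul1r ger0_norm.
by rewrite ltr0_norm // mulrN mulN1r opprK.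
Qed.

Lemma norm_sgn_pm_mul (R : realDomainType) (x y : R) :
  `|(sgn_pm x * sgn_pm y)%:~R : R| = 1.
Proof. by case: (sgn_pmP x) => ->; case: (sgn_pmP y) => ->; rewrite ?normrN normr1. Qed.

Lemma orthogonal_mx_row_dot (R : nzRingType) (n : nat) (M : 'M[R]_n) (i i' : 'I_n) :
  orthogonal_mx M -> i != i' -> \sum_k M i k * M i' k = 0.
Proof.
move=> MMt ii'; have := congr1 (fun A : 'M[R]_n => A i i') MMt.
rewrite !mxE (negbTE ii') mulr0n => dot_eq0.
by rewrite -[RHS]dot_eq0; apply: eq_bigr => k _; rewrite mxE.
Qed.

Lemma sgn_pm_dot_bound (R : realDomainType) (n : nat) (x y : 'I_n -> R) (c d : R) :
  \sum_k x k * y k = 0 ->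
  (forall k, `|1 - c * (`|x k| * `|y k|)| <= d) ->
  `|(\sum_k sgn_pm (x k) * sgn_pm (y k))%:~R : R| <= n%:R * d.
Proof.
move=> dot_eq0 near_c.
have -> : (\sum_k sgn_pm (x k) * sgn_pm (y k))%:~R =
    \sum_k (sgn_pm (x k) * sgn_pm (y k))%:~R * (1 - c * (`|x k| * `|y k|)) :> R.
  apply/eqP; rewrite -subr_eq0 rmorph_sum -sumrB -[X in _ == X](mulr0 c) -{2}dot_eq0.
  rewrite mulr_sumr; apply/eqP/eq_bigr => k _ /=.
  rewrite -[in RHS](sgn_pm_mul_norm (x k)) -[in RHS](sgn_pm_mul_norm (y k)) intrM; ring.
apply: (le_trans (ler_norm_sum _ _ _)).
rewrite mulr_natl -[n in _ *+ n]card_ord -sumr_const; apply: ler_sum => k _.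
by rewrite normrM norm_sgn_pm_mul mul1r.
Qed.

Lemma sum_pm1_eq0 (n : nat) (u : 'I_n -> int) :
  (forall k, u k = 1 \/ u k = -1) ->
  `|\sum_k u k| < (if odd n then 1 else 2) -> \sum_k u k = 0.
Proof.
move=> u_pm1; pose v k : int := if u k == 1 then 0 else 1.
have sum_v : \sum_k u k = n%:Z - 2 * \sum_k v k.
  rewrite -natz -[n in n%:R]card_ord -sumr_const mulr_sumr -sumrB.
  by apply: eq_bigr => k _; rewrite /v; case: (u_pm1 k) => ->.
have := odd_double_half n; rewrite -muln2 sum_v ltr_norml.
by case: (odd n) => /= n_eq /andP[]; lia.
Qed.

Lemma le_mul_of_sqrt_le (R : rcfType) (a x y : R) :
  0 <= a -> Num.sqrt a <= x -> Num.sqrt a <= y -> a <= x * y.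
Proof.
move=> a_ge0 ax ay; rewrite -(sqr_sqrtr a_ge0) expr2.
by apply: ler_pM; rewrite ?sqrtr_ge0.
Qed.

Lemma mul_le_of_le_sqrt (R : rcfType) (b x y : R) :
  0 <= b -> 0 <= x -> 0 <= y -> x <= Num.sqrt b -> y <= Num.sqrt b -> x * y <= b.
Proof.
by move=> b_ge0 x_ge0 y_ge0 xb yb; rewrite -(sqr_sqrtr b_ge0) expr2; apply: ler_pM.
Qed.

Lemma flat_entries_near_inv (R : rcfType) (n : nat) (eps x y : R) :
  (0 < n)%N -> 0 <= eps < 1 ->
  Num.sqrt ((1 - eps) / n%:R) <= x <= Num.sqrt ((1 + eps) / n%:R) ->
  Num.sqrt ((1 - eps) / n%:R) <= y <= Num.sqrt ((1 + eps) / n%:R) ->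
  `|1 - n%:R * (x * y)| <= eps.
Proof.
move=> n_gt0 /andP[eps_ge0 eps_lt1] /andP[xlo xhi] /andP[ylo yhi].
have n_pos : (0 : R) < n%:R by rewrite ltr0n.
have lo_ge0 : 0 <= (1 - eps) / n%:R by rewrite divr_ge0 ?ltW // subr_gt0.
have hi_ge0 : 0 <= (1 + eps) / n%:R by rewrite divr_ge0 ?ltW //; lra.
have lo := le_mul_of_sqrt_le lo_ge0 xlo ylo.
have hi := mul_le_of_le_sqrt hi_ge0 (le_trans (sqrtr_ge0 _) xlo)
  (le_trans (sqrtr_ge0 _) ylo) xhi yhi.
rewrite ler_pdivrMr // mulrC in lo; rewrite ler_pdivlMr // mulrC in hi.
by rewrite ler_norml; apply/andP; split; lra.
Qed.

Definition sign_mx (R : realDomainType) (n : nat) (M : 'M[R]_n) : 'M[int]_n :=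
  map_mx (@sgn_pm R) M.

Lemma sign_mx_hadamard (R : realDomainType) (n : nat) (M : 'M[R]_n) (eps : R) :
  orthogonal_mx M ->
  n%:R * eps < (if odd n then 1 else 2) ->
  (forall i i' k, `|1 - n%:R * (`|M i k| * `|M i' k|)| <= eps) ->
  is_hadamard (sign_mx M).
Proof.
move=> MMt n_eps near; split => [i j | i i' ii']; first by rewrite mxE; apply: sgn_pmP.
under eq_bigr do rewrite !mxE.
apply: sum_pm1_eq0 => [k | ].
  by case: (sgn_pmP (M i k)) => ->; case: (sgn_pmP (M i' k)) => ->; [left|right|right|left].
rewrite -(ltr_int R) intr_norm.
apply: le_lt_trans (sgn_pm_dot_bound (orthogonal_mx_row_dot MMt ii') (near i i')) _.
by case: (odd n) n_eps.
Qed.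

Lemma hadamard_order_dvd4 (n : nat) (H : 'M[int]_n) :
  (3 <= n)%N -> is_hadamard H -> (4 %| n)%N.
Proof.
case: n H => [|[|[|n]]] H // _ [Hpm Hor].
pose a : 'I_n.+3 := inord 0; pose b : 'I_n.+3 := inord 1; pose c : 'I_n.+3 := inord 2.
have ab : a != b by apply/eqP => /(congr1 val); rewrite /= !inordK.
have ac : a != c by apply/eqP => /(congr1 val); rewrite /= !inordK.
have bc : b != c by apply/eqP => /(congr1 val); rewrite /= !inordK.
pose w k : int := if (H a k == H b k) && (H a k == H c k) then 1 else 0.
have term_4w k : (H a k + H b k) * (H a k + H c k) = 4 * w k.
  by rewrite /w; case: (Hpm a k) => ->; case: (Hpm b k) => ->; case: (Hpm c k) => ->.
have sq_a k : H a k * H a k = 1 by case: (Hpm a k) => ->.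
have sum_n : \sum_k (H a k + H b k) * (H a k + H c k) = n.+3%:R.
  under eq_bigr => k _ do rewrite mulrDl !mulrDr sq_a [H b k * H a k]mulrC.
  by rewrite !big_split /= !Hor // sumr_const card_ord !addr0.
have : n.+3%:Z = 4 * \sum_k w k.
  by rewrite -natz -sum_n mulr_sumr; apply: eq_bigr => k _; apply: term_4w.
lia.
Qed.

Theorem proposition2p1 (R : realType) (n : nat) (eps : R) :
  (3 <= n)%N ->
  0 < eps ->
  (if odd n then eps < 1 / n%:R else eps < 2 / n%:R) ->
  (exists M : 'M[R]_n,
      orthogonal_mx M /\
      forall j k : 'I_n,
        Num.sqrt ((1 - eps) / n%:R) <= `|M j k| <= Num.sqrt ((1 + eps) / n%:R)) ->
  (4 %| n)%N /\ exists H : 'M[int]_n, is_hadamard H.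
Proof.
move=> n_ge3 eps_gt0 eps_small [M [MMt flat]].
have n_gt0 : (0 < n)%N by apply: leq_trans n_ge3.
have n_ge3R : (3 : R) <= n%:R by rewrite (ler_nat R 3 n).
have n_eps : n%:R * eps < (if odd n then 1 else 2).
  by rewrite mulrC; case: (odd n) eps_small; rewrite -ltr_pdivlMr ?ltr0n.
have eps_lt1 : eps < 1 by case: (odd n) n_eps => ?; nra.
have eps_range : 0 <= eps < 1 by rewrite ltW.
have S_had := sign_mx_hadamard MMt n_eps
  (fun i i' k => flat_entries_near_inv n_gt0 eps_range (flat i k) (flat i' k)).
by split; [apply: hadamard_order_dvd4 S_had | exists (sign_mx M)].
Qed.
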